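(* Let $C=[c_{j_1,j_2}]\in\mathbb{R}^{n_1\times n_2}$, $\mathbf d_1\in\mathbb{R}^{n_1}_{++}$, $\mathbf d_2\in\mathbb{R}^{n_2}_{++}$ with $\mathbf 1_{n_1}^\top\mathbf d_1=\mathbf 1_{n_2}^\top\mathbf d_2$. Then there exists a unique $(\mathbf x,\mathbf y)\in\mathbb{R}^{n_1}\times\mathbb{R}^{n_2}$ with $c_{j_1,j_2}-x_{j_1}-y_{j_2}>0$ for all $j_1,j_2$ and $\mathbf 1_{n_1}^\top\mathbf x=\mathbf 1_{n_2}^\top\mathbf y$, such that the matrix $[(c_{j_1,j_2}-x_{j_1}-y_{j_2})^{-1}]$ has row sums vector $\mathbf d_1$ and column sums vector $\mathbf d_2$.
   Context: $\mathbf 1_n$ is the all-ones vector and $\mathbb{R}^n_{++}$ the set of entrywise positive vectors. *)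

From mathcomp Require Import all_boot all_order all_algebra.
From mathcomp Require Import reals.

From mathcomp Require Import all_boot all_order all_algebra.
From mathcomp Require Import classical_sets reals.
From mathcomp Require Import ring lra.
Import Order.TTheory GRing.Theory Num.Theory.
Local Open Scope ring_scope.

(* Existence is proved by Perron's method. Write the unknowns as (x, -z), so
   that each entry C i j - x i + z j decreases in x and increases in z, and
   call (x, z) a J-subsolution if all entries are positive, every row of
   reciprocals sums to at most d1 i and every column j in J to at least d2 j.
   Freeze z outside J and at a column k0 outside J (which bounds x from
   above); the coordinatewise supremum of such subsolutions is again one, as
   all conditions are closed and monotone, and it is tight in every row and
   every column of J, since otherwise one coordinate could still be raised.
   Columns enter J one at a time: the columns not yet in J are first pushed so
   far that they stay below their targets, and as the reciprocals have the
   same total by rows and by columns, the new column is forced above its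
   target. Once J holds every column, the inequalities add up to equalities.
   Uniqueness: for two solutions with entries e and e', e - e' = a i + b j
   while 1/e' - 1/e has zero row and column sums, so the sum of
   (1/e' - 1/e) (e - e') = (e - e')^2 / (e e') vanishes; the normalisation
   sum x = sum y then excludes the remaining shift (x + c, y - c). *)

Section FiniteSums.
Context {R : realFieldType} {n : nat}.
Implicit Types (a b F G : 'I_n -> R) (d : R).

Lemma le_of_small_slack [x y] (K eta : R) : 0 < eta ->
  (forall e, 0 < e -> e < eta -> x <= y + e * K) -> x <= y.
Proof.
move=> eta_gt0 slack; apply/ler_addgt0Pr => e e_gt0.
pose e' := Num.min (eta / 2) (e / (`|K| + 1)).
have e'_gt0 : 0 < e' by rewrite lt_min divr_gt0 //= divr_gt0 // ltr_wpDl.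
have e'_lt : e' < eta by rewrite gt_min; apply/orP; left; lra.
suff : e' * K <= e by have := slack e' e'_gt0 e'_lt; lra.
apply: le_trans (ler_norm _) _; rewrite normrM (gtr0_norm e'_gt0).
have : e' <= e / (`|K| + 1) by rewrite ge_min lexx orbT.
rewrite ler_pdivlMr ?ltr_wpDl //; nra.
Qed.

Lemma ler_psum_term F k : (forall i, 0 <= F i) -> F k <= \sum_i F i.
Proof. by move=> F_ge0; rewrite (bigD1 k) //= lerDl sumr_ge0. Qed.

Lemma psumr_gt0E [F] : (forall i, 0 < F i) -> (0 < \sum_i F i) = (0 < n)%N.
Proof.
case: n F => [|m] F F_gt0; first by rewrite big_ord0 ltxx.
by rewrite (bigD1 ord0) //= ltr_wpDr ?F_gt0 // sumr_ge0 // => i _; rewrite ltW.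
Qed.

Lemma ler_sum_eq F G : (forall i, F i <= G i) -> \sum_i G i <= \sum_i F i ->
  forall i, F i = G i.
Proof.
move=> FG GF i; apply/eqP; rewrite eq_sym -subr_eq0; apply/eqP.
apply: (@psumr_eq0P _ _ xpredT (fun i => G i - F i)) => // [j _|].
  by rewrite subr_ge0.
by apply/eqP; rewrite eq_le sumr_ge0 ?sumrB ?subr_le0 ?GF // => j _; rewrite subr_ge0.
Qed.

Lemma ler_sum_eq_rest F G k : (forall j, j != k -> F j <= G j) ->
  \sum_i F i = \sum_i G i -> G k <= F k.
Proof.
move=> FG; rewrite (bigD1 k) //= [X in _ = X](bigD1 k) //=.
have : \sum_(j | j != k) F j <= \sum_(j | j != k) G j by exact: ler_sum.
lra.
Qed.

Lemma exists_pos_lbound [F] : (forall i, 0 < F i) ->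
  exists2 m, 0 < m & forall i, m <= F i.
Proof.
move=> F_gt0; have Finv_ge0 i : 0 <= (F i)^-1 by rewrite invr_ge0 ltW.
have S_ge0 : 0 <= \sum_i (F i)^-1 by apply: sumr_ge0.
exists (1 + \sum_i (F i)^-1)^-1 => [|i]; first by rewrite invr_gt0 ltr_wpDr.
rewrite -lef_pV2 ?posrE ?invr_gt0 ?ltr_wpDr // invrK.
have := ler_psum_term (fun i => (F i)^-1) i Finv_ge0; lra.
Qed.

Lemma ler_sum_inv_scale [a b] [t s : R] : 0 < t -> 0 < s -> (forall i, 0 < a i) ->
  (forall i, t * a i <= s * b i) -> t * \sum_i (b i)^-1 <= s * \sum_i (a i)^-1.
Proof.
move=> t_gt0 s_gt0 a_gt0 tab; rewrite !mulr_sumr; apply: ler_sum => i _.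
have b_gt0 : 0 < b i by rewrite -(pmulr_rgt0 _ s_gt0) (lt_le_trans _ (tab i)) ?mulr_gt0.
by rewrite ler_pdivrMr // mulrAC ler_pdivlMr // mulrC [s * _]mulrC.
Qed.

Lemma ler_sum_inv a b : (forall i, 0 < a i) -> (forall i, a i <= b i) ->
  \sum_i (b i)^-1 <= \sum_i (a i)^-1.
Proof.
move=> a_gt0 ab; have := @ler_sum_inv_scale a b 1 1 ltr01 ltr01 a_gt0.
by rewrite !mul1r; apply=> i; rewrite !mul1r.
Qed.

Lemma sum_inv_lt [a d] : 0 < d -> (forall i, n.+1%:R / d <= a i) -> \sum_i (a i)^-1 < d.
Proof.
move=> d_gt0 a_ge; have K_gt0 : 0 < n.+1%:R / d by rewrite divr_gt0.
have inv_le i : (a i)^-1 <= d / n.+1%:R.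
  by rewrite -[d / _]invf_div lef_pV2 ?posrE ?(lt_le_trans K_gt0).
apply: le_lt_trans (ler_sum _ (fun i _ => inv_le i)) _.
rewrite sumr_const card_ord -[_ *+ n]mulr_natl mulrCA gtr_pMr //.
by rewrite ltr_pdivrMr ?ltr0Sn // mul1r ltr_nat.
Qed.

Lemma sum_inv_subr_le [a d] : (forall i, 0 < a i) -> \sum_i (a i)^-1 < d ->
  exists2 delta, 0 < delta &
    (forall i, 0 < a i - delta) /\ \sum_i (a i - delta)^-1 <= d.
Proof.
move=> a_gt0; set S := \sum_i _ => S_lt.
have S_ge0 : 0 <= S by apply: sumr_ge0 => i _; rewrite invr_ge0 ltW.
have d_gt0 : 0 < d by lra.
have [m m_gt0 m_le] := exists_pos_lbound a_gt0.
pose t := (S + d) / (2 * d).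
have td : t * d = (S + d) / 2 by rewrite /t; field; rewrite gt_eqF.
have t_gt0 : 0 < t by rewrite divr_gt0 ?mulr_gt0; lra.
have t_lt1 : t < 1 by rewrite -(ltr_pM2r d_gt0) td mul1r; lra.
have delta_gt0 : 0 < (1 - t) * m by rewrite mulr_gt0 ?subr_gt0.
exists ((1 - t) * m) => //.
have shift i : t * a i <= 1 * (a i - (1 - t) * m).
  by have := m_le i; nra.
split=> [i|].
  by have := shift i; have := mulr_gt0 t_gt0 (a_gt0 i); lra.
rewrite -(ler_pM2l t_gt0).
have := @ler_sum_inv_scale a (fun i => a i - (1 - t) * m) _ _ t_gt0 ltr01 a_gt0 shift.
by rewrite -/S; lra.
Qed.

Lemma sum_inv_addr_ge [a d] : 0 < d -> (forall i, 0 < a i) -> d < \sum_i (a i)^-1 ->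
  exists2 delta, 0 < delta & d <= \sum_i (a i + delta)^-1.
Proof.
move=> d_gt0 a_gt0; set S := \sum_i _ => S_gt.
have [m m_gt0 m_le] := exists_pos_lbound a_gt0.
pose s := S / d.
have sd : s * d = S by rewrite /s divfK ?gt_eqF.
have s_gt1 : 1 < s by rewrite -(ltr_pM2r d_gt0) sd mul1r.
have delta_gt0 : 0 < (s - 1) * m by rewrite mulr_gt0 ?subr_gt0.
exists ((s - 1) * m) => //.
have shift i : 1 * (a i + (s - 1) * m) <= s * a i.
  by have := m_le i; nra.
have shift_gt0 i : 0 < a i + (s - 1) * m by rewrite addr_gt0.
rewrite -(ler_pM2l (lt_trans ltr01 s_gt1)).
have := @ler_sum_inv_scale _ a _ _ ltr01 (lt_trans ltr01 s_gt1) shift_gt0 shift.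
by rewrite -/S; lra.
Qed.

Lemma sum_inv_le_closed b d : 0 < d ->
  (forall e, 0 < e -> exists a,
     [/\ forall i, 0 < a i, forall i, a i - e <= b i & \sum_i (a i)^-1 <= d]) ->
  (forall i, 0 < b i) /\ \sum_i (b i)^-1 <= d.
Proof.
move=> d_gt0 approx.
have a_ge a i : (forall i, 0 < a i) -> \sum_i (a i)^-1 <= d -> 1 <= d * a i.
  move=> a_gt0 Sa; rewrite -(mulVf (lt0r_neq0 (a_gt0 i))) ler_wpM2r ?(ltW (a_gt0 i)) //.
  by apply: le_trans Sa; apply: ler_psum_term => j; rewrite invr_ge0 ltW.
have b_ge i : 1 <= d * b i.
  apply/ler_addgt0Pr => e e_gt0.
  have [a [a_gt0 ab Sa]] := approx (e / d) (divr_gt0 e_gt0 d_gt0).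
  have := a_ge a i a_gt0 Sa; have := ler_wpM2l (ltW d_gt0) (ab i).
  by rewrite mulrBr mulrCA divff ?gt_eqF // mulr1; lra.
have b_gt0 i : 0 < b i by rewrite -(pmulr_rgt0 _ d_gt0) (lt_le_trans ltr01).
split=> //; apply: (le_of_small_slack (d * \sum_i (b i)^-1) d^-1).
  by rewrite invr_gt0.
move=> e e_gt0 e_lt; have [a [a_gt0 ab Sa]] := approx e e_gt0.
have t_gt0 : 0 < 1 - e * d by rewrite subr_gt0 -ltr_pdivlMr // div1r.
have scale i : (1 - e * d) * a i <= 1 * b i.
  have := a_ge a i a_gt0 Sa; have := ab i; have := e_gt0; nra.
have := ler_sum_inv_scale t_gt0 ltr01 a_gt0 scale; lra.
Qed.

Lemma sum_inv_ge_closed b d : (forall i, 0 < b i) ->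
  (forall e, 0 < e -> exists a,
     [/\ forall i, 0 < a i, forall i, b i <= a i + e & d <= \sum_i (a i)^-1]) ->
  d <= \sum_i (b i)^-1.
Proof.
move=> b_gt0 approx; have [m m_gt0 m_le] := exists_pos_lbound b_gt0.
apply: (le_of_small_slack (d / m) m) => // e e_gt0 e_lt.
have [a [a_gt0 ba Sa]] := approx e e_gt0.
have t_gt0 : 0 < 1 - e / m by rewrite subr_gt0 ltr_pdivrMr // mul1r.
have scale i : (1 - e / m) * b i <= 1 * a i.
  have : e <= e / m * b i by rewrite mulrAC ler_pdivlMr //; have := m_le i; nra.
  have := ba i; lra.
have := ler_sum_inv_scale t_gt0 ltr01 b_gt0 scale.
have := ler_wpM2l (ltW t_gt0) Sa; lra.
Qed.
End FiniteSums.

Section AdditivePerturbations.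
Context {R : realFieldType} {n1 n2 : nat}.
Implicit Types (a : 'I_n1 -> R) (b : 'I_n2 -> R) (e : 'I_n1 -> 'I_n2 -> R).

Lemma eq_of_inv_marginals e e' a b :
  (forall i j, 0 < e i j) -> (forall i j, 0 < e' i j) ->
  (forall i, \sum_j (e i j)^-1 = \sum_j (e' i j)^-1) ->
  (forall j, \sum_i (e i j)^-1 = \sum_i (e' i j)^-1) ->
  (forall i j, e i j - e' i j = a i + b j) -> forall i j, e i j = e' i j.
Proof.
move=> e_gt0 e'_gt0 rows cols diff.
pose f i j := (e' i j)^-1 - (e i j)^-1.
have row0 i : \sum_j f i j = 0 by rewrite sumrB rows subrr.
have col0 j : \sum_i f i j = 0 by rewrite sumrB cols subrr.
pose T i j := f i j * (e i j - e' i j).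
have T_sq i j : T i j = (e i j - e' i j) ^+ 2 / (e i j * e' i j).
  by rewrite /T /f; field; rewrite !lt0r_neq0.
have T_ge0 i j : 0 <= T i j by rewrite T_sq divr_ge0 ?sqr_ge0 // mulr_ge0 // ltW.
have T_sum : \sum_i \sum_j T i j = 0.
  under eq_bigr => i _ do under eq_bigr => j _ do rewrite /T diff mulrDr.
  rewrite (eq_bigr _ (fun i _ => big_split _ _ _ _ _)) big_split /=.
  rewrite [X in _ + X]exchange_big /= big1 => [|i _]; last by rewrite -mulr_suml row0 mul0r.
  by rewrite big1 ?add0r // => j _; rewrite -mulr_suml col0 mul0r.
move=> i j; apply/eqP; rewrite -subr_eq0.
have Ti_sum : \sum_j T i j = 0.
  by apply: (psumr_eq0P _ T_sum) => // k _; apply: sumr_ge0.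
have /eqP := psumr_eq0P (fun j _ => T_ge0 i j) Ti_sum (i := j) isT.
rewrite T_sq mulf_eq0 invr_eq0 sqrf_eq0 mulf_eq0.
by rewrite (gt_eqF (e_gt0 i j)) (gt_eqF (e'_gt0 i j)) !orbF.
Qed.

Lemma additive_eq0 [a b] : (0 < n1)%N = (0 < n2)%N ->
  (forall i j, a i + b j = 0) -> \sum_i a i = \sum_j b j ->
  (forall i, a i = 0) /\ (forall j, b j = 0).
Proof.
case: n1 a => [|m1] a; case: n2 b => [|m2] b //= _ ab sum_ab; first by split=> -[].
have b_eq j : b j = - a ord0 by have := ab ord0 j; lra.
have a_eq i : a i = a ord0 by have := ab i ord0; rewrite b_eq; lra.
suff a0 : a ord0 = 0 by split=> [i|j]; rewrite ?a_eq ?b_eq a0 ?oppr0.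
move: sum_ab; rewrite (eq_bigr _ (fun i _ => a_eq i)) (eq_bigr _ (fun j _ => b_eq j)).
rewrite !sumr_const !card_ord mulNrn => sum_ab.
have /eqP : a ord0 *+ (m1.+1 + m2.+1) = 0 by rewrite mulrnDr sum_ab addNr.
by rewrite mulrn_eq0 addSn /= => /eqP.
Qed.

Lemma exists_balancing_shift a b : (0 < n1)%N = (0 < n2)%N ->
  exists c, \sum_i (a i + c) = \sum_j (b j - c).
Proof.
case: n1 a => [|m1] a; case: n2 b => [|m2] b //= _; first by exists 0; rewrite !big_ord0.
pose c := (\sum_j b j - \sum_i a i) / (m1.+1 + m2.+1)%:R.
have cN : c * (m1.+1 + m2.+1)%:R = \sum_j b j - \sum_i a i.
  by rewrite divfK // pnatr_eq0 addSn.
exists c; rewrite !big_split /= sumrN !sumr_const !card_ord.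
rewrite -[c *+ m1.+1]mulr_natr -[c *+ m2.+1]mulr_natr.
by rewrite natrD in cN; lra.
Qed.
End AdditivePerturbations.

Section MatrixScaling.
Context {R : realType} {n1 n2 : nat} (C : 'M[R]_(n1, n2)).
Context {d1 : 'I_n1 -> R} {d2 : 'I_n2 -> R}.
Hypotheses (d1_gt0 : forall i, 0 < d1 i) (d2_gt0 : forall j, 0 < d2 j).
Implicit Types (x : 'I_n1 -> R) (z : 'I_n2 -> R) (J : pred 'I_n2).

Definition entry x z i j := C i j - x i + z j.
Definition rowsum x z i := \sum_j (entry x z i j)^-1.
Definition colsum x z j := \sum_i (entry x z i j)^-1.

Definition subsolution J x z := [/\ forall i j, 0 < entry x z i j,
  forall i, rowsum x z i <= d1 i & forall j, J j -> d2 j <= colsum x z j].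

Lemma subsolution_sub [J J' x z] : (forall j, J' j -> J j) ->
  subsolution J x z -> subsolution J' x z.
Proof. by move=> J'J [pos row col]; split=> // j /J'J /col. Qed.

Lemma subsolution_entry_ge [J x z] i j : subsolution J x z ->
  (d1 i)^-1 <= entry x z i j.
Proof.
case=> pos row _; rewrite -lef_pV2 ?posrE ?invr_gt0 // invrK.
by apply: le_trans (row i); apply: ler_psum_term => k; rewrite invr_ge0 ltW.
Qed.

Lemma subsolution_raise_x [J x z i] : subsolution J x z -> rowsum x z i < d1 i ->
  exists2 delta, 0 < delta & subsolution J [eta x with i |-> x i + delta] z.
Proof.
case=> pos row col row_lt.
have [delta delta_gt0 [pos_i row_i]] := sum_inv_subr_le (pos i) row_lt.
exists delta => //; set x' := [eta x with _ |-> _].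
have entry_x' k j :
    entry x' z k j = if k == i then entry x z i j - delta else entry x z k j.
  by rewrite /entry /x' /=; case: eqP => [->|_] //; lra.
have pos' k j : 0 < entry x' z k j by rewrite entry_x'; case: eqP.
have le' k j : entry x' z k j <= entry x z k j.
  by rewrite entry_x'; case: eqP => [->|_] //; lra.
split=> // [k|j /col]; last by move/le_trans; apply; apply: ler_sum_inv.
rewrite /rowsum; under eq_bigr do rewrite entry_x'.
by case: eqP => [->|_]; last exact: row.
Qed.

Lemma subsolution_raise_z [J x z j] :
  subsolution J x z -> J j -> d2 j < colsum x z j ->
  exists2 delta, 0 < delta & subsolution J x [eta z with j |-> z j + delta].
Proof.
case=> pos row col Jj col_gt.
have [delta delta_gt0 col_j] := sum_inv_addr_ge (d2_gt0 j) (pos^~ j) col_gt.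
exists delta => //; set z' := [eta z with _ |-> _].
have entry_z' i k :
    entry x z' i k = if k == j then entry x z i j + delta else entry x z i k.
  by rewrite /entry /z' /=; case: eqP => [->|_] //; lra.
have le' i k : entry x z i k <= entry x z' i k.
  by rewrite entry_z'; case: eqP => [->|_] //; lra.
split=> [i k|i|k Jk]; first exact: lt_le_trans (le' i k).
  by apply: le_trans (row i); apply: ler_sum_inv.
rewrite /colsum; under eq_bigr do rewrite entry_z'.
by case: eqP => [->|_]; last exact: col.
Qed.

Lemma subsolution_raise_z_off [J x z z'] : (forall j, z j <= z' j) ->
  (forall j, J j -> z' j = z j) -> subsolution J x z -> subsolution J x z'.
Proof.
move=> zz' z'J [pos row col].
have le' i j : entry x z i j <= entry x z' i j by rewrite /entry lerD2l.
split=> [i j|i|j Jj]; first exact: lt_le_trans (le' i j).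
  by apply: le_trans (row i); apply: ler_sum_inv.
by rewrite /colsum /entry z'J //; exact: col.
Qed.

Lemma exists_subsolution0 : exists x z, subsolution pred0 x z.
Proof.
pose K i := n2.+1%:R / d1 i.
exists (fun i => - \sum_j `|C i j| - K i), (fun _ => 0).
have entry_ge i j : K i <= entry (fun i => - \sum_j `|C i j| - K i) (fun _ => 0) i j.
  have := ler_psum_term (fun k => `|C i k|) j (fun _ => normr_ge0 _).
  by have := ler_norm (- C i j); rewrite /entry normrN; lra.
split=> // [i j|i]; first by apply: lt_le_trans (entry_ge i j); rewrite divr_gt0.
by apply/ltW/sum_inv_lt; [exact: d1_gt0 | exact: entry_ge].
Qed.

Section Maximal.
Context {J : pred 'I_n2} {k0 : 'I_n2} {x0 : 'I_n1 -> R} {z0 : 'I_n2 -> R}.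
Hypotheses (Jk0 : ~~ J k0) (sub0 : subsolution J x0 z0).

Let admissible x z := subsolution J x z /\ forall j, ~~ J j -> z j = z0 j.
Let X i := C i k0 + z0 k0 - (d1 i)^-1.

Lemma admissible_x_le [x z] i : admissible x z -> x i <= X i.
Proof.
case=> sub z_out; have := subsolution_entry_ge i k0 sub.
by rewrite /entry z_out // /X; lra.
Qed.

Lemma admissible_z_bounded [j] : J j ->
  exists B, forall x z, admissible x z -> z j <= B.
Proof.
move=> Jj; pose K := n1.+1%:R / d2 j.
exists (\sum_i `|X i - C i j| + K) => x z adm; rewrite leNgt; apply/negP => z_gt.
have entry_ge i : K <= entry x z i j.
  have := admissible_x_le i adm; have := ler_norm (X i - C i j).
  have := ler_psum_term (fun i => `|X i - C i j|) i (fun _ => normr_ge0 _).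
  by rewrite /entry; lra.
have [[_ _ col] _] := adm; have := col j Jj.
by have := sum_inv_lt (d2_gt0 j) entry_ge; rewrite /colsum; lra.
Qed.

Let Sx i := [set t | exists x z, admissible x z /\ x i = t]%classic.
Let Sz j := [set t | exists x z, admissible x z /\ z j = t]%classic.

Lemma has_sup_Sx i : has_sup (Sx i).
Proof.
split; first by exists (x0 i), x0, z0.
by exists (X i); rewrite /ubound /= => t [x [z [adm <-]]]; exact: admissible_x_le i adm.
Qed.

Lemma has_sup_Sz [j] : J j -> has_sup (Sz j).
Proof.
move=> Jj; split; first by exists (z0 j), x0, z0.
have [B zB] := admissible_z_bounded Jj.
by exists B; rewrite /ubound /= => t [x [z [adm <-]]]; exact: zB _ _ adm.
Qed.

Let xs i := sup (Sx i).
Let zs j := if J j then sup (Sz j) else z0 j.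

Lemma admissible_le_sup [x z] : admissible x z ->
  (forall i, x i <= xs i) /\ (forall j, z j <= zs j).
Proof.
move=> adm; split=> [i|j].
  by apply: (sup_upper_bound (has_sup_Sx i)); exists x, z.
rewrite /zs; case: ifP => [Jj|/negbT Jj]; last by rewrite adm.2.
by apply: (sup_upper_bound (has_sup_Sz Jj)); exists x, z.
Qed.

Lemma xs_approx i [e] : 0 < e -> exists x z, admissible x z /\ xs i - e < x i.
Proof.
move=> e_gt0; have [_ [x [z [adm <-]]] lt] := sup_adherent e_gt0 (has_sup_Sx i).
by exists x, z.
Qed.

Lemma zs_approx [j e] : J j -> 0 < e -> exists x z, admissible x z /\ zs j - e < z j.
Proof.
move=> Jj e_gt0; have [_ [x [z [adm <-]]] lt] := sup_adherent e_gt0 (has_sup_Sz Jj).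
by exists x, z; rewrite /zs Jj.
Qed.

Lemma admissible_sup : admissible xs zs.
Proof.
have row i : (forall j, 0 < entry xs zs i j) /\ rowsum xs zs i <= d1 i.
  apply: (sum_inv_le_closed _ _ (d1_gt0 i)) => e e_gt0.
  have [x [z [adm lt]]] := xs_approx i e_gt0; have [_ le_z] := admissible_le_sup adm.
  have [[pos row _] _] := adm; exists (entry x z i); split=> [//|j|]; last exact: row.
  by rewrite /entry; have := le_z j; lra.
split; last by move=> j /negbTE Jj; rewrite /zs Jj.
split=> [i j|i|j Jj]; [exact: (row i).1 | exact: (row i).2 |].
apply: (sum_inv_ge_closed (entry xs zs ^~ j)) => [i|e e_gt0]; first exact: (row i).1.
have [x [z [adm lt]]] := zs_approx Jj e_gt0; have [le_x _] := admissible_le_sup adm.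
have [[pos _ col] _] := adm; exists (entry x z ^~ j); split=> [//|i|]; last exact: col.
by rewrite /entry; have := le_x i; lra.
Qed.

Lemma maximal_subsolution : exists x z, [/\ subsolution J x z,
  forall i, rowsum x z i = d1 i, forall j, J j -> colsum x z j = d2 j &
  forall j, ~~ J j -> z j = z0 j].
Proof.
have [sub z_out] := admissible_sup; have [_ row col] := sub.
exists xs, zs; split=> // [i|j Jj].
  apply/eqP; rewrite eq_le row /= leNgt; apply/negP => row_lt.
  have [delta delta_gt0 sub'] := subsolution_raise_x sub row_lt.
  have [le_x _] := admissible_le_sup (conj sub' z_out).
  by have := le_x i; rewrite /= eqxx; lra.
apply/eqP; rewrite eq_le col // andbT leNgt; apply/negP => col_gt.
have [delta delta_gt0 sub'] := subsolution_raise_z sub Jj col_gt.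
have z'_out k : ~~ J k -> [eta zs with j |-> zs j + delta] k = z0 k.
  by move=> Jk /=; case: eqP => [kj|_]; [move: Jk; rewrite kj Jj | exact: z_out].
have [_ le_z] := admissible_le_sup (conj sub' z'_out).
by have := le_z j; rewrite /= eqxx; lra.
Qed.
End Maximal.

Lemma sum_colsum x z : \sum_j colsum x z j = \sum_i rowsum x z i.
Proof. exact: exchange_big. Qed.

Hypothesis d_sum : \sum_i d1 i = \sum_j d2 j.

Lemma subsolution_add [J k x z] : ~~ J k -> subsolution J x z ->
  exists x' z', subsolution (predU1 k J) x' z'.
Proof.
move=> Jk sub; pose X i := C i k + z k - (d1 i)^-1.
pose K j := n1.+1%:R / d2 j.
(* The maximal step below yields x <= X, so after raising the columns outside
   J and k by L j their entries stay at least K j: these columns stay below d2. *)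
pose L j := \sum_i `|C i j - X i + z j| + K j.
have L_ge0 j : 0 <= L j by rewrite addr_ge0 ?sumr_ge0 // ltW ?divr_gt0.
pose z1 j := if (j == k) || J j then z j else z j + L j.
have sub1 : subsolution J x z1.
  apply: (subsolution_raise_z_off _ _ sub) => [j|j Jj]; rewrite /z1.
    by case: ifP => _; [exact: lexx | rewrite lerDl].
  by rewrite Jj orbT.
have [x' [z' [sub' row' col' z'_out]]] := maximal_subsolution Jk sub1.
have z'k : z' k = z k by rewrite z'_out // /z1 eqxx.
have x'_le i : x' i <= X i.
  by have := subsolution_entry_ge i k sub'; rewrite /entry z'k /X; lra.
exists x', z'; have [pos' row_le col_ge] := sub'.
split=> // j /predU1P [-> {j}|]; last exact: col_ge.
apply: (ler_sum_eq_rest (colsum x' z')) => [j jk|]; last first.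
  by rewrite sum_colsum (eq_bigr _ (fun i _ => row' i)) d_sum.
case: (boolP (J j)) => [Jj|Jj]; first by rewrite col'.
apply/ltW/sum_inv_lt => // i.
rewrite /entry z'_out // /z1 (negbTE jk) (negbTE Jj) /L /K /=.
have := ler_psum_term (fun i => `|C i j - X i + z j|) i (fun _ => normr_ge0 _).
by have := ler_norm (- (C i j - X i + z j)); rewrite normrN; have := x'_le i; lra.
Qed.

Lemma exists_subsolutionT : exists x z, subsolution predT x z.
Proof.
suff [x [z sub]] : exists x z, subsolution [pred j | j \in enum 'I_n2] x z.
  by exists x, z; apply: subsolution_sub sub => j _; rewrite /= mem_enum.
elim: (enum 'I_n2) => [|k s [x [z sub]]].
  by have [x [z sub]] := exists_subsolution0; exists x, z; apply: subsolution_sub sub.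
case: (boolP (k \in s)) => ks.
  by exists x, z; apply: subsolution_sub sub => j; rewrite /= inE => /predU1P [->|].
have [x' [z' sub']] := subsolution_add ks sub.
by exists x', z'; apply: subsolution_sub sub' => j; rewrite /= inE.
Qed.

Lemma subsolutionT_eq [x z] : subsolution predT x z ->
  (forall i, rowsum x z i = d1 i) /\ (forall j, colsum x z j = d2 j).
Proof.
case=> _ row col; split.
  by apply: ler_sum_eq row _; rewrite d_sum -sum_colsum; apply: ler_sum => j _; exact: col.
suff col_eq j : d2 j = colsum x z j by move=> j; rewrite col_eq.
apply: ler_sum_eq (fun j => col j isT) _ j.
by rewrite sum_colsum -d_sum; apply: ler_sum => i _; exact: row.
Qed.

Lemma lt0n_dims_eq : (0 < n1)%N = (0 < n2)%N.
Proof. by rewrite -(psumr_gt0E d1_gt0) -(psumr_gt0E d2_gt0) d_sum. Qed.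

Definition scaling_solution x (y : 'I_n2 -> R) :=
  [/\ forall i j, 0 < C i j - x i - y j, \sum_i x i = \sum_j y j,
      forall i, \sum_j (C i j - x i - y j)^-1 = d1 i &
      forall j, \sum_i (C i j - x i - y j)^-1 = d2 j].

Lemma exists_scaling_solution : exists x y, scaling_solution x y.
Proof.
have [x [z sub]] := exists_subsolutionT; have [row col] := subsolutionT_eq sub.
have [c balanced] := exists_balancing_shift x (fun j => - z j) lt0n_dims_eq.
exists (fun i => x i + c), (fun j => - z j - c).
have E i j : C i j - (x i + c) - (- z j - c) = entry x z i j by rewrite /entry; lra.
have [pos _ _] := sub; split=> // [i j|i|j]; first by rewrite E.
  by rewrite -(row i); apply: eq_bigr => j _; rewrite E.
by rewrite -(col j); apply: eq_bigr => i _; rewrite E.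
Qed.

Lemma scaling_solution_unique [x y x' y'] :
  scaling_solution x y -> scaling_solution x' y' ->
  (forall i, x' i = x i) /\ (forall j, y' j = y j).
Proof.
case=> pos sum row col [pos' sum' row' col'].
have same := eq_of_inv_marginals _ _ (fun i => x' i - x i) (fun j => y' j - y j)
  pos pos' (fun i => etrans (row i) (esym (row' i))) (fun j => etrans (col j) (esym (col' j))).
have diff i j : (C i j - x i - y j) - (C i j - x' i - y' j) = (x' i - x i) + (y' j - y j).
  by lra.
have shift0 i j : (x' i - x i) + (y' j - y j) = 0 by have := same diff i j; lra.
have [|x0 y0] := additive_eq0 lt0n_dims_eq shift0; first by rewrite !sumrB sum sum'.
by split=> [i|j]; [have := x0 i | have := y0 j]; lra.
Qed.
End MatrixScaling.

Theorem corollary2p8 (R : realType) (n1 n2 : nat)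
  (C : 'M[R]_(n1, n2)) (d1 : 'cV[R]_n1) (d2 : 'cV[R]_n2) :
  (forall j1, 0 < d1 j1 0) -> (forall j2, 0 < d2 j2 0) ->
  \sum_(j1 < n1) d1 j1 0 = \sum_(j2 < n2) d2 j2 0 ->
  let P := fun (x : 'cV[R]_n1) (y : 'cV[R]_n2) =>
    [/\ (forall j1 j2, 0 < C j1 j2 - x j1 0 - y j2 0),
        \sum_(j1 < n1) x j1 0 = \sum_(j2 < n2) y j2 0,
        (forall j1, \sum_(j2 < n2) (C j1 j2 - x j1 0 - y j2 0)^-1 = d1 j1 0) &
        (forall j2, \sum_(j1 < n1) (C j1 j2 - x j1 0 - y j2 0)^-1 = d2 j2 0)] in
  exists x : 'cV[R]_n1, exists y : 'cV[R]_n2,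
    P x y /\ forall x' y', P x' y' -> x' = x /\ y' = y.
Proof.
move=> d1_gt0 d2_gt0 d_sum P.
have [x [y sol]] := exists_scaling_solution C d1_gt0 d2_gt0 d_sum.
exists (\col_i x i), (\col_j y j); split.
  have [pos sum row col] := sol; split=> [i j|||].
  - by rewrite !mxE.
  - by under eq_bigr do rewrite mxE; under [RHS]eq_bigr do rewrite mxE.
  - by move=> i; under eq_bigr do rewrite !mxE; exact: row.
  - by move=> j; under eq_bigr do rewrite !mxE; exact: col.
move=> x' y' /(scaling_solution_unique C d1_gt0 d2_gt0 d_sum sol) [x'E y'E].
by split; apply/matrixP => i j; rewrite (ord1 j) mxE; [exact: x'E | exact: y'E].
Qed.
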